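(* Fix $X\in\{\mathsf B,\mathsf C,\mathsf D\}$ and $n\in\mathbb Z_{>0}$, and let $w\in W^X_n$. Let $i\in\mathbb Z$, $k\in[n]$ with $i<k$ be such that $t:=t_{ik}\in W^X_\infty$ and $\ell^X(wt)=\ell^X(w)+1$. Then (a) $wt\in W^X_{n+1}$; (b) $wt(k)<w(k)$; (c) $\mathrm{Des}(wt)\subseteq\mathrm{Des}(w)\cup\{k-1\}$. If moreover $wt\notin W^X_n$, then (d) $i=-n-1$; and (e) $\ell^X(wt\cdot t_{jk})\ne\ell^X(wt)+1$ for every integer $j$ with $i<j<k$ and $t_{jk}\in W^X_\infty$.
   Context: A signed permutation is a bijection $w$ of $\mathbb Z$ with $w(-i)=-w(i)$ for all $i$ and $w(i)=i$ for all but finitely many $i$; $(wt)(m)=w(t(m))$. $W^{\mathsf B}_\infty=W^{\mathsf C}_\infty$ is the group of all signed permutations, $W^{\mathsf D}_\infty$ the subgroup with $|\{i>0:w(i)<0\}|$ even; $W^X_n$ = elements of $W^X_\infty$ fixing every $m>n$. Lengths: $\ell^{\mathsf B}(w)=\ell^{\mathsf C}(w)=(\mathrm{inv}(w)+\ell_0(w))/2$, $\ell^{\mathsf D}(w)=(\mathrm{inv}(w)-\ell_0(w))/2$, with $\mathrm{inv}(w)=|\{(p,q)\in\mathbb Z^2:p<q,w(p)>w(q)\}|$ and $\ell_0(w)=|\{p>0:w(p)<0\}|$ (these are the Coxeter lengths for generators $t_0=(-1,1),t_1,t_2,\dots$ resp. $t_{-1}=(1,-2)(2,-1),t_1,t_2,\dots$,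 $t_m=(m,m+1)(-m,-m-1)$). For integers $i\ne0$ and $j$, $t_{ij}=(i,j)(-i,-j)$ (the identity if $i=-j$), and $t_{0j}=(-j,j)$, which lies in $W^{\mathsf B}_\infty$ but not $W^{\mathsf D}_\infty$. $\mathrm{Des}(w)=\{m\in\mathbb Z_{>0}:w(m)>w(m+1)\}$. *)

From Stdlib Require Import ZArith List Bool Lia ClassicalEpsilon.
Import ListNotations.
Open Scope Z_scope.

Definition fin_supp (w : Z -> Z) : Prop :=
  exists N : nat, forall m : Z, Z.of_nat N < Z.abs m -> w m = m.

Definition is_signed_perm (w : Z -> Z) : Prop :=
  (forall a b, w a = w b -> a = b) /\
  (forall b, exists a, w a = b) /\
  (forall i, w (- i) = - w i) /\
  fin_supp w.

Definition comp (w t : Z -> Z) : Z -> Z := fun m => w (t m).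

(* A support bound of w (chosen classically); any N with w fixing all
   |m| > N works, and such N exists whenever w is finitely supported. *)
Definition supp_bound (w : Z -> Z) : nat :=
  epsilon (inhabits 0%nat)
    (fun N : nat => forall m : Z, Z.of_nat N < Z.abs m -> w m = m).

Definition zwin (N : nat) : list Z :=
  map (fun a => Z.of_nat a - Z.of_nat N) (seq 0 (2 * N + 1)).

(* inv(w) = #{(p,q) in Z^2 : p < q, w p > w q}; all such pairs lie in the
   window [-N,N] for a support bound N. *)
Definition inv (w : Z -> Z) : Z :=
  let r := zwin (supp_bound w) in
  Z.of_nat (length (filter (fun pq => (fst pq <? snd pq) && (w (snd pq) <? w (fst pq)))
                          (list_prod r r))).

Definition ell0 (w : Z -> Z) : Z :=
  Z.of_nat (length (filter (fun p => (0 <? p) && (w p <? 0)) (zwin (supp_bound w)))).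

Inductive typ := TB | TC | TD.

Definition ell (X : typ) (w : Z -> Z) : Z :=
  match X with
  | TB | TC => (inv w + ell0 w) / 2
  | TD => (inv w - ell0 w) / 2
  end.

Definition in_Winf (X : typ) (w : Z -> Z) : Prop :=
  is_signed_perm w /\ (X = TD -> Z.Even (ell0 w)).

Definition in_W (X : typ) (n : Z) (w : Z -> Z) : Prop :=
  in_Winf X w /\ forall m, n < m -> w m = m.

(* t_{ij} = (i,j)(-i,-j) for i <> 0 (identity if i = -j); t_{0j} = (-j,j) *)
Definition tr (i j : Z) : Z -> Z := fun m =>
  if i =? 0 then
    (if m =? j then - j else if m =? - j then j else m)
  else if i =? - j then m
  else if m =? i then j
  else if m =? j then i
  else if m =? - i then - j
  else if m =? - j then - i
  else m.

Definition is_des (w : Z -> Z) (m : Z) : Prop := 0 < m /\ w (m + 1) < w m.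

(* Lengths can be computed on any window [-N, N] outside which the permutations involved are
   the identity.  Right multiplication by t = t_{ik} only changes the relative order of pairs
   meeting {i, k, -i, -k}, and counting these pairs shows that 2 l(wt) - 2 l(w) is at most -2
   when w(k) < w(i), while for w(i) < w(k) it is at least 2, and at least 4 as soon as some c with
   i < c < k has w(i) < w(c) < w(k) (for t_{0k} it is at least 4 whenever w(k) > 0).  Hence
   l(wt) = l(w) + 1 forces w(i) < w(k) with no such intermediate value.  Taking c = -n-1 gives
   i >= -n-1, whence (a) and (d); the same gap condition rules out new descents other than k-1;
   and for (e), wt(k) = -n-1 is the least value of wt on the window, so no t_{jk} with j < k can
   lengthen wt. *)

From Stdlib Require Import ZArith List Bool Lia Permutation ClassicalEpsilon FunctionalExtensionality.
Import ListNotations.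
Open Scope Z_scope.

Fixpoint sumZ {A} (f : A -> Z) (l : list A) : Z :=
  match l with [] => 0 | x :: r => f x + sumZ f r end.

Lemma sumZ_app {A} (f : A -> Z) l1 l2 : sumZ f (l1 ++ l2) = sumZ f l1 + sumZ f l2.
Proof. induction l1; simpl; lia. Qed.

Lemma sumZ_ext {A} (f g : A -> Z) l : (forall x, In x l -> f x = g x) -> sumZ f l = sumZ g l.
Proof. induction l; simpl; intros H; [reflexivity|]. rewrite H, IHl; auto. Qed.

Lemma sumZ_add {A} (f g : A -> Z) l : sumZ (fun x => f x + g x) l = sumZ f l + sumZ g l.
Proof. induction l; simpl; lia. Qed.

Lemma sumZ_sub {A} (f g : A -> Z) l : sumZ (fun x => f x - g x) l = sumZ f l - sumZ g l.
Proof. induction l; simpl; lia. Qed.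

Lemma sumZ_eq0 {A} (f : A -> Z) l : (forall x, In x l -> f x = 0) -> sumZ f l = 0.
Proof. induction l; simpl; intros H; [reflexivity|]. rewrite H, IHl; auto. Qed.

Lemma sumZ_ge0 {A} (f : A -> Z) l : (forall x, In x l -> 0 <= f x) -> 0 <= sumZ f l.
Proof.
  induction l; simpl; intros H; [lia|].
  specialize (IHl (fun y Hy => H y (or_intror Hy))). specialize (H a (or_introl eq_refl)). lia.
Qed.

Lemma sumZ_le0 {A} (f : A -> Z) l : (forall x, In x l -> f x <= 0) -> sumZ f l <= 0.
Proof.
  induction l; simpl; intros H; [lia|].
  specialize (IHl (fun y Hy => H y (or_intror Hy))). specialize (H a (or_introl eq_refl)). lia.
Qed.

Lemma sumZ_ge_term {A} (f : A -> Z) l c : (forall x, In x l -> 0 <= f x) -> In c l -> f c <= sumZ f l.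
Proof.
  induction l as [|x l IH]; simpl; intros H Hc; [contradiction|].
  pose proof (sumZ_ge0 f l (fun y Hy => H y (or_intror Hy))).
  destruct Hc as [<-|Hc]; [lia|].
  specialize (IH (fun y Hy => H y (or_intror Hy)) Hc). specialize (H x (or_introl eq_refl)). lia.
Qed.

Lemma sumZ_perm {A} (f : A -> Z) l l' : Permutation l l' -> sumZ f l = sumZ f l'.
Proof. induction 1; simpl; lia. Qed.

Lemma sumZ_map {A B} (f : A -> Z) (h : B -> A) l : sumZ f (map h l) = sumZ (fun x => f (h x)) l.
Proof. induction l; simpl; congruence. Qed.

Lemma sumZ_count {A} (P : A -> bool) l :
  Z.of_nat (length (filter P l)) = sumZ (fun x => Z.b2z (P x)) l.
Proof. induction l; simpl; [reflexivity|]. destruct (P a); cbn [length Z.b2z]; lia. Qed.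

Lemma sumZ_exchange {A B} (h : A -> B -> Z) (l : list A) (m : list B) :
  sumZ (fun x => sumZ (h x) m) l = sumZ (fun y => sumZ (fun x => h x y) l) m.
Proof.
  induction l; simpl; [symmetry; apply sumZ_eq0; reflexivity|].
  rewrite IHl, <- sumZ_add. reflexivity.
Qed.

Lemma sumZ_reindex {A} (f : A -> Z) (t : A -> A) l : NoDup l -> (forall x, t (t x) = x) ->
  (forall x, In x l -> In (t x) l) -> sumZ (fun x => f (t x)) l = sumZ f l.
Proof.
  intros Hl Ht Hin. rewrite <- sumZ_map. apply sumZ_perm, NoDup_Permutation; auto.
  - apply FinFun.Injective_map_NoDup; auto. intros x y E. now rewrite <- (Ht x), E, Ht.
  - intros x; rewrite in_map_iff; split.
    + intros [y [<- Hy]]; auto.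
    + intros Hx. exists (t x). auto.
Qed.

Lemma sumZ_list_prod {A B} (g : A * B -> Z) (l : list A) (m : list B) :
  sumZ g (list_prod l m) = sumZ (fun x => sumZ (fun y => g (x, y)) m) l.
Proof. induction l; [reflexivity|]. cbn [list_prod sumZ]. rewrite sumZ_app, sumZ_map, IHl. reflexivity. Qed.


Definition mem (S : list Z) (x : Z) : bool := existsb (Z.eqb x) S.

Definition outside (S l : list Z) : list Z := filter (fun x => negb (mem S x)) l.

Lemma mem_spec S x : mem S x = true <-> In x S.
Proof.
  unfold mem. rewrite existsb_exists. split.
  - intros [y [Hy E]]. apply Z.eqb_eq in E. now subst.
  - intros Hx. exists x. split; [exact Hx | apply Z.eqb_refl].
Qed.

Lemma in_outside S l x : In x (outside S l) <-> In x l /\ ~ In x S.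
Proof.
  unfold outside. rewrite filter_In, negb_true_iff, <- (mem_spec S x).
  destruct (mem S x); intuition congruence.
Qed.

Lemma perm_outside S l : NoDup l -> NoDup S -> incl S l -> Permutation l (S ++ outside S l).
Proof.
  intros Hl HS Hincl. apply NoDup_Permutation; auto.
  - apply NoDup_app; auto.
    + unfold outside. apply NoDup_filter; auto.
    + intros x Hx. rewrite in_outside. tauto.
  - intros x. rewrite in_app_iff, in_outside. specialize (Hincl x).
    split; [|intuition]. intros Hx. destruct (in_dec Z.eq_dec x S); tauto.
Qed.

Lemma sumZ_outside (f : Z -> Z) S l : NoDup l -> NoDup S -> incl S l ->
  sumZ f l = sumZ f S + sumZ f (outside S l).
Proof. intros. rewrite <- sumZ_app. apply sumZ_perm, perm_outside; auto. Qed.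

Lemma sumZ_pairs_outside (h : Z -> Z -> Z) S l : NoDup l -> NoDup S -> incl S l ->
  (forall p q, ~ In p S -> ~ In q S -> h p q = 0) ->
  sumZ (fun p => sumZ (h p) l) l =
  sumZ (fun c => sumZ (fun s => h c s + h s c) S) (outside S l) + sumZ (fun s => sumZ (h s) S) S.
Proof.
  intros Hl HS Hincl H0. set (R := outside S l).
  assert (HR : forall x, In x R -> ~ In x S) by (intros x; unfold R; rewrite in_outside; tauto).
  rewrite (sumZ_outside _ S l) by auto. fold R.
  rewrite (sumZ_ext _ (fun p => sumZ (h p) S + sumZ (h p) R) S)
    by (intros; apply sumZ_outside; auto).
  rewrite (sumZ_ext _ (fun p => sumZ (h p) S + sumZ (h p) R) R)
    by (intros; apply sumZ_outside; auto).
  rewrite !sumZ_add, (sumZ_exchange h S R), (sumZ_eq0 (fun p => sumZ (h p) R) R).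
  - rewrite (sumZ_ext (fun c => sumZ (fun s => h c s + h s c) S) (fun c => sumZ (h c) S + sumZ (fun s => h s c) S) R)
      by (intros; apply sumZ_add).
    rewrite sumZ_add. lia.
  - intros p Hp. apply sumZ_eq0. intros q Hq. apply H0; auto.
Qed.

Definition supp_in (N : nat) (w : Z -> Z) : Prop :=
  forall m, Z.of_nat N < Z.abs m -> w m = m.

Definition inv_on (N : nat) (w : Z -> Z) : Z :=
  sumZ (fun p => sumZ (fun q => Z.b2z ((p <? q) && (w q <? w p))) (zwin N)) (zwin N).

Definition ell0_on (N : nat) (w : Z -> Z) : Z :=
  sumZ (fun p => Z.b2z ((0 <? p) && (w p <? 0))) (zwin N).

Definition ell2_on (X : typ) (N : nat) (w : Z -> Z) : Z :=
  match X with
  | TB | TC => inv_on N w + ell0_on N w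
  | TD => inv_on N w - ell0_on N w
  end.

Lemma in_zwin N x : In x (zwin N) <-> Z.abs x <= Z.of_nat N.
Proof.
  unfold zwin. rewrite in_map_iff. split.
  - intros [a [<- Ha]]. apply in_seq in Ha. lia.
  - intros H. exists (Z.to_nat (x + Z.of_nat N)). rewrite in_seq. lia.
Qed.

Lemma NoDup_zwin N : NoDup (zwin N).
Proof. apply FinFun.Injective_map_NoDup; [intros a b; lia | apply seq_NoDup]. Qed.

Lemma zwin_incl K M : (K <= M)%nat -> incl (zwin K) (zwin M).
Proof. intros H x. rewrite !in_zwin. lia. Qed.

Lemma supp_bound_spec w : fin_supp w -> supp_in (supp_bound w) w.
Proof. apply (epsilon_spec (inhabits 0%nat) (fun N => supp_in N w)). Qed.

Lemma supp_in_widen K M w : (K <= M)%nat -> supp_in K w -> supp_in M w.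
Proof. intros HKM Hw m Hm. apply Hw. lia. Qed.

Lemma signed_perm_0 w : is_signed_perm w -> w 0 = 0.
Proof. intros [_ [_ [Hodd _]]]. specialize (Hodd 0). simpl in Hodd. lia. Qed.

Lemma supp_in_abs_le N w x : is_signed_perm w -> supp_in N w ->
  Z.abs x <= Z.of_nat N -> Z.abs (w x) <= Z.of_nat N.
Proof.
  intros [Hinj _] HN Hx. destruct (Z_le_gt_dec (Z.abs (w x)) (Z.of_nat N)) as [H|H]; auto.
  assert (E : w (w x) = w x) by (apply HN; lia). apply Hinj in E. lia.
Qed.

(* Outside the window both entries of a pair are fixed, and inside the window values stay inside. *)
Lemma supp_in_inversion N w p q : is_signed_perm w -> supp_in N w -> p < q -> w q < w p ->
  Z.abs p <= Z.of_nat N /\ Z.abs q <= Z.of_nat N.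
Proof.
  intros Hw HN Hpq Hv.
  destruct (Z_le_gt_dec (Z.abs p) (Z.of_nat N)) as [Hp|Hp];
  destruct (Z_le_gt_dec (Z.abs q) (Z.of_nat N)) as [Hq|Hq]; auto; exfalso.
  - pose proof (supp_in_abs_le N w p Hw HN Hp). rewrite (HN q) in Hv; lia.
  - pose proof (supp_in_abs_le N w q Hw HN Hq). rewrite (HN p) in Hv; lia.
  - rewrite (HN p), (HN q) in Hv; lia.
Qed.

Lemma inv_on_widen K M w : is_signed_perm w -> supp_in K w -> (K <= M)%nat ->
  inv_on M w = inv_on K w.
Proof.
  intros Hw HK HKM. unfold inv_on.
  set (R := outside (zwin K) (zwin M)).
  assert (HR : forall x, In x R -> Z.of_nat K < Z.abs x)
    by (intros x; unfold R; rewrite in_outside, !in_zwin; lia).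
  assert (H0 : forall p q, In p R \/ In q R -> Z.b2z ((p <? q) && (w q <? w p)) = 0).
  { intros p q Hpq. destruct (Z.ltb_spec p q), (Z.ltb_spec (w q) (w p)); try reflexivity.
    pose proof (supp_in_inversion K w p q Hw HK). destruct Hpq as [Hx|Hx]; apply HR in Hx; lia. }
  assert (Hsplit : forall f, sumZ f (zwin M) = sumZ f (zwin K) + sumZ f R)
    by (intros; apply sumZ_outside; auto using NoDup_zwin, zwin_incl).
  rewrite Hsplit. rewrite (sumZ_eq0 _ R), Z.add_0_r.
  - apply sumZ_ext. intros p _. rewrite Hsplit.
    rewrite (sumZ_eq0 _ R); [lia|]. intros q Hq. apply H0; auto.
  - intros p Hp. apply sumZ_eq0. intros q _. apply H0; auto.
Qed.

Lemma ell0_on_widen K M w : supp_in K w -> (K <= M)%nat -> ell0_on M w = ell0_on K w.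
Proof.
  intros HK HKM. unfold ell0_on.
  rewrite (sumZ_outside _ (zwin K) (zwin M) (NoDup_zwin M) (NoDup_zwin K) (zwin_incl K M HKM)).
  rewrite (sumZ_eq0 _ (outside _ _)); [lia|].
  intros p Hp. apply in_outside in Hp. rewrite !in_zwin in Hp. rewrite (HK p) by lia.
  destruct (Z.ltb_spec 0 p), (Z.ltb_spec p 0); reflexivity || lia.
Qed.

Lemma inv_on_eq N w : is_signed_perm w -> supp_in N w -> inv w = inv_on N w.
Proof.
  intros Hw HN. pose proof (supp_bound_spec w (proj2 (proj2 (proj2 Hw)))) as Hs.
  unfold inv. rewrite sumZ_count, sumZ_list_prod.
  change (inv_on (supp_bound w) w = inv_on N w).
  rewrite <- (inv_on_widen _ (Nat.max (supp_bound w) N) w), (inv_on_widen N (Nat.max (supp_bound w) N));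
    auto; lia.
Qed.

Lemma ell0_on_eq N w : supp_in N w -> ell0 w = ell0_on N w.
Proof.
  intros HN. pose proof (supp_bound_spec w (ex_intro _ N HN)) as Hs.
  unfold ell0. rewrite sumZ_count.
  change (ell0_on (supp_bound w) w = ell0_on N w).
  rewrite <- (ell0_on_widen _ (Nat.max (supp_bound w) N) w), (ell0_on_widen N (Nat.max (supp_bound w) N));
    auto; lia.
Qed.

Lemma ell_eq X N w : is_signed_perm w -> supp_in N w -> ell X w = ell2_on X N w / 2.
Proof. intros Hw HN. unfold ell. rewrite (inv_on_eq N), (ell0_on_eq N) by assumption. now destruct X. Qed.

Ltac case_eqb :=
  repeat (match goal with
          | |- context [Z.eqb ?a ?b] =>
              lazymatch a with
              | context [if _ then _ else _] => fail
              | _ => destruct (Z.eqb_spec a b)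
              end
          end; cbn iota).

Lemma tr_values i k : i <> 0 -> i <> -k -> k <> 0 ->
  tr i k i = k /\ tr i k k = i /\ tr i k (-i) = -k /\ tr i k (-k) = -i.
Proof. intros. unfold tr. repeat split; case_eqb; lia. Qed.

Lemma tr_fix i k m : ~ In m [i; k; -i; -k] -> tr i k m = m.
Proof. cbn. intros. unfold tr. case_eqb; lia. Qed.

Lemma tr0_fix k m : ~ In m [k; -k] -> tr 0 k m = m.
Proof. cbn. intros. unfold tr. case_eqb; lia. Qed.

Lemma tr0_values k : k <> 0 -> tr 0 k k = -k /\ tr 0 k (-k) = k.
Proof. intros. unfold tr. split; case_eqb; lia. Qed.

Lemma tr_opp k : tr (-k) k = fun m => m.
Proof. apply functional_extensionality. intros m. unfold tr. case_eqb; lia. Qed.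

Lemma tr_invol i k m : k <> 0 -> tr i k (tr i k m) = m.
Proof. intros. unfold tr. case_eqb; lia. Qed.

Lemma tr_in_zwin N i k m : Z.abs i <= Z.of_nat N -> Z.abs k <= Z.of_nat N ->
  In m (zwin N) -> In (tr i k m) (zwin N).
Proof. rewrite !in_zwin. intros. unfold tr. case_eqb; lia. Qed.

Lemma tr_supp_in N i k : Z.abs i <= Z.of_nat N -> Z.abs k <= Z.of_nat N -> supp_in N (tr i k).
Proof. intros Hi Hk m Hm. unfold tr. case_eqb; lia. Qed.

Lemma comp_signed_perm u t : is_signed_perm u -> is_signed_perm t -> is_signed_perm (comp u t).
Proof.
  intros [Ui [Us [Uo [N1 UN]]]] [Ti [Ts [To [N2 TN]]]]. unfold comp. repeat split.
  - intros a b E. now apply Ti, Ui.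
  - intros b. destruct (Us b) as [a <-]. destruct (Ts a) as [c <-]. now exists c.
  - intros x. now rewrite To, Uo.
  - exists (N1 + N2)%nat. intros m Hm. rewrite TN by lia. apply UN. lia.
Qed.

Lemma comp_supp_in N u t : supp_in N u -> supp_in N t -> supp_in N (comp u t).
Proof. intros Hu Ht m Hm. unfold comp. rewrite Ht; auto. Qed.

(* After reindexing by the involution t, inv (comp u t) counts the pairs (p, q) with t p < t q
   and u q < u p; inv_delta is the change of that indicator. *)
Definition inv_delta (u t : Z -> Z) (p q : Z) : Z :=
  (Z.b2z (t p <? t q) - Z.b2z (p <? q)) * Z.b2z (u q <? u p).

Definition cross_term (u t : Z -> Z) (S : list Z) (c : Z) : Z :=
  sumZ (fun s => inv_delta u t c s + inv_delta u t s c) S.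

Lemma inv_on_comp_invol N u t S : (forall x, t (t x) = x) ->
  (forall x, In x (zwin N) -> In (t x) (zwin N)) -> (forall x, ~ In x S -> t x = x) ->
  NoDup S -> incl S (zwin N) ->
  inv_on N (comp u t) - inv_on N u =
  sumZ (cross_term u t S) (outside S (zwin N)) + sumZ (fun s => sumZ (inv_delta u t s) S) S.
Proof.
  intros Hinv Hwin Hfix HS Hincl.
  unfold cross_term. rewrite <- (sumZ_pairs_outside (inv_delta u t)); auto using NoDup_zwin.
  2: { intros p q Hp Hq. unfold inv_delta. rewrite (Hfix p Hp), (Hfix q Hq). lia. }
  set (F := fun p q => Z.b2z ((t p <? t q) && (u q <? u p))).
  assert (Hreindex : inv_on N (comp u t) = sumZ (fun p => sumZ (F p) (zwin N)) (zwin N)).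
  { unfold inv_on, comp.
    rewrite <- (sumZ_reindex (fun p => sumZ (F p) (zwin N)) t); auto using NoDup_zwin.
    apply sumZ_ext. intros p _.
    rewrite <- (sumZ_reindex (F (t p)) t); auto using NoDup_zwin.
    apply sumZ_ext. intros q _. unfold F. now rewrite !Hinv. }
  rewrite Hreindex. unfold inv_on. rewrite <- sumZ_sub. apply sumZ_ext. intros p _.
  rewrite <- sumZ_sub. apply sumZ_ext. intros q _.
  unfold F, inv_delta. destruct (t p <? t q), (p <? q), (u q <? u p); reflexivity.
Qed.

Lemma ell0_on_comp N u t S : (forall x, ~ In x S -> t x = x) -> NoDup S -> incl S (zwin N) ->
  ell0_on N (comp u t) - ell0_on N u =
  sumZ (fun s => Z.b2z (0 <? s) * (Z.b2z (u (t s) <? 0) - Z.b2z (u s <? 0))) S.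
Proof.
  intros Hfix HS Hincl. unfold ell0_on, comp. rewrite <- sumZ_sub.
  rewrite (sumZ_outside _ S (zwin N)) by auto using NoDup_zwin.
  rewrite (sumZ_eq0 _ (outside _ _)).
  - rewrite Z.add_0_r. apply sumZ_ext. intros s _.
    destruct (0 <? s), (u (t s) <? 0), (u s <? 0); reflexivity.
  - intros x Hx. apply in_outside in Hx. rewrite Hfix by tauto. lia.
Qed.

Ltac case_ltb :=
  repeat match goal with
  | |- context [?x <? ?y] =>
      first [ rewrite (proj2 (Z.ltb_lt x y)) by lia
            | rewrite (proj2 (Z.ltb_ge x y)) by lia
            | destruct (Z.ltb_spec x y) ]
  end; cbn [andb Z.b2z].

Lemma cross_pair u t a b c : t a = b -> t b = a -> t c = c -> a < b -> c <> a -> c <> b ->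
  u c <> u a -> u c <> u b ->
  let T := inv_delta u t c a + inv_delta u t a c + inv_delta u t c b + inv_delta u t b c in
  (u a < u b -> 0 <= T) /\ (u a < u b -> a < c < b -> u a < u c < u b -> 2 <= T) /\
  (u b < u a -> T <= 0).
Proof.
  intros Ha Hb Hc Hab H1 H2 H3 H4 T. unfold T, inv_delta. rewrite Ha, Hb, Hc.
  repeat split; intros; case_ltb; lia.
Qed.

Lemma cross_term_tr u i k c : is_signed_perm u -> 0 < k -> i < k -> i <> 0 -> i <> -k ->
  ~ In c [i; k; -i; -k] ->
  let T := cross_term u (tr i k) [i; k; -i; -k] c in
  (u i < u k -> 0 <= T) /\ (u i < u k -> i < c < k -> u i < u c < u k -> 2 <= T) /\
  (u k < u i -> T <= 0).
Proof.
  intros [Ui [_ [Uo _]]] Hk Hik Hi0 Hmk Hc T.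
  destruct (tr_values i k) as [Ti [Tk [Tmi Tmk]]]; try lia.
  pose proof (tr_fix i k c Hc) as Tc.
  assert (c <> i /\ c <> k /\ c <> -i /\ c <> -k) as [C1 [C2 [C3 C4]]] by (cbn in Hc; lia).
  assert (Hu : forall x, c <> x -> u c <> u x) by (intros x Hx E; apply Ui in E; auto).
  destruct (cross_pair u (tr i k) i k c Ti Tk Tc Hik C1 C2 (Hu _ C1) (Hu _ C2)) as [P1 [P2 P3]].
  destruct (cross_pair u (tr i k) (-k) (-i) c Tmk Tmi Tc ltac:(lia) C4 C3 (Hu _ C4) (Hu _ C3))
    as [Q1 [Q2 Q3]].
  rewrite !Uo in Q1, Q2, Q3. unfold T, cross_term. cbn [sumZ].
  repeat split; intros.
  - specialize (P1 ltac:(lia)). specialize (Q1 ltac:(lia)). lia.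
  - specialize (P2 ltac:(lia) ltac:(lia) ltac:(lia)). specialize (Q1 ltac:(lia)). lia.
  - specialize (P3 ltac:(lia)). specialize (Q3 ltac:(lia)). lia.
Qed.

Lemma cross_term_tr0 u k c : is_signed_perm u -> 0 < k -> ~ In c [k; -k] ->
  let T := cross_term u (tr 0 k) [k; -k] c in
  (0 < u k -> 0 <= T) /\ (0 < u k -> c = 0 -> 2 <= T) /\ (u k < 0 -> T <= 0).
Proof.
  intros Hu Hk Hc T. pose proof (signed_perm_0 u Hu) as U0. destruct Hu as [Ui [_ [Uo _]]].
  destruct (tr0_values k) as [Tk Tmk]; try lia.
  pose proof (tr0_fix k c Hc) as Tc.
  assert (c <> k /\ c <> -k) as [C1 C2] by (cbn in Hc; lia).
  assert (Hu : forall x, c <> x -> u c <> u x) by (intros x Hx E; apply Ui in E; auto).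
  destruct (cross_pair u (tr 0 k) (-k) k c Tmk Tk Tc ltac:(lia) C2 C1 (Hu _ C2) (Hu _ C1))
    as [P1 [P2 P3]].
  rewrite Uo in P1, P2, P3. unfold T, cross_term. cbn [sumZ].
  repeat split; intros.
  - specialize (P1 ltac:(lia)). lia.
  - subst c. specialize (P2 ltac:(lia) ltac:(lia) ltac:(lia)). lia.
  - specialize (P3 ltac:(lia)). lia.
Qed.

Definition is_middle (u : Z -> Z) (i k c : Z) : Prop :=
  ~ In c [i; k; -i; -k] /\ i < c < k /\ u i < u c < u k.

Lemma ell2_on_comp_tr X N u i k : is_signed_perm u -> supp_in N u ->
  0 < k -> i < k -> i <> 0 -> i <> -k -> Z.abs i <= Z.of_nat N -> k <= Z.of_nat N ->
  (u k < u i -> ell2_on X N (comp u (tr i k)) <= ell2_on X N u - 2) /\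
  (forall c, is_middle u i k c -> ell2_on X N u + 4 <= ell2_on X N (comp u (tr i k))).
Proof.
  intros Hu HN Hk Hik Hi0 Hmk HiN HkN.
  pose proof (signed_perm_0 u Hu) as U0. pose proof Hu as [Ui [_ [Uo _]]].
  destruct (tr_values i k) as [Ti [Tk [Tmi Tmk]]]; try lia.
  set (S := [i; k; -i; -k]).
  assert (HS : NoDup S) by (repeat constructor; cbn; lia).
  assert (Hincl : incl S (zwin N)) by (intros x Hx; apply in_zwin; cbn in Hx; lia).
  pose proof (inv_on_comp_invol N u (tr i k) S (fun x => tr_invol i k x ltac:(lia))
    (fun x => tr_in_zwin N i k x HiN ltac:(lia)) (tr_fix i k) HS Hincl) as DI.
  pose proof (ell0_on_comp N u (tr i k) S (tr_fix i k) HS Hincl) as DE.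
  set (C := sumZ (cross_term u (tr i k) S) (outside S (zwin N))) in DI.
  assert (HC : forall c, In c (outside S (zwin N)) -> _)
    by (intros c Hc; apply in_outside in Hc; exact (cross_term_tr u i k c Hu Hk Hik Hi0 Hmk (proj2 Hc))).
  assert (C_le0 : u k < u i -> C <= 0) by (intros; apply sumZ_le0; intros c Hc; now apply HC).
  assert (C_ge2 : forall c, is_middle u i k c -> 2 <= C).
  { intros c [Hc [Hcb Hcv]].
    assert (Hout : In c (outside S (zwin N))) by (apply in_outside; rewrite in_zwin; split; [lia | exact Hc]).
    apply Z.le_trans with (1 := proj1 (proj2 (HC c Hout)) ltac:(lia) Hcb Hcv).
    apply sumZ_ge_term; auto. intros x Hx. apply HC; auto; lia. }
  clearbody C.
  assert (u i <> u k /\ u i <> - u k /\ u i <> 0 /\ u k <> 0) as [V1 [V2 [V3 V4]]].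
  { rewrite <- Uo, <- U0. repeat split; intros E; apply Ui in E; lia. }
  unfold S in DI, DE. cbn [sumZ] in DI, DE. unfold inv_delta in DI.
  rewrite Ti, Tk, Tmi, Tmk, !Uo in DI. rewrite Ti, Tk, Tmi, Tmk, !Uo in DE.
  clear - DI DE C_le0 C_ge2 Hk Hik Hi0 Hmk V1 V2 V3 V4.
  split; [intros Hv | intros c Hc; specialize (C_ge2 c Hc); destruct Hc as [_ [_ Hv]]];
    revert DI DE; case_ltb; intros; destruct X; cbn [ell2_on]; lia.
Qed.

Lemma ell2_on_comp_tr0 X N u k : X <> TD -> is_signed_perm u -> supp_in N u ->
  0 < k -> k <= Z.of_nat N ->
  (u k < 0 -> ell2_on X N (comp u (tr 0 k)) <= ell2_on X N u - 2) /\
  (0 < u k -> ell2_on X N u + 4 <= ell2_on X N (comp u (tr 0 k))).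
Proof.
  intros HX Hu HN Hk HkN. pose proof Hu as [_ [_ [Uo _]]].
  destruct (tr0_values k) as [Tk Tmk]; try lia.
  set (S := [k; -k]).
  assert (HS : NoDup S) by (repeat constructor; cbn; lia).
  assert (Hincl : incl S (zwin N)) by (intros x Hx; apply in_zwin; cbn in Hx; lia).
  pose proof (inv_on_comp_invol N u (tr 0 k) S (fun x => tr_invol 0 k x ltac:(lia))
    (fun x => tr_in_zwin N 0 k x ltac:(lia) ltac:(lia)) (tr0_fix k) HS Hincl) as DI.
  pose proof (ell0_on_comp N u (tr 0 k) S (tr0_fix k) HS Hincl) as DE.
  set (C := sumZ (cross_term u (tr 0 k) S) (outside S (zwin N))) in DI.
  assert (HC : forall c, In c (outside S (zwin N)) -> _)
    by (intros c Hc; apply in_outside in Hc; exact (cross_term_tr0 u k c Hu Hk (proj2 Hc))).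
  assert (C_le0 : u k < 0 -> C <= 0) by (intros; apply sumZ_le0; intros c Hc; now apply HC).
  assert (C_ge2 : 0 < u k -> 2 <= C).
  { intros Hv.
    assert (H0 : In 0 (outside S (zwin N))) by (apply in_outside; rewrite in_zwin; cbn; lia).
    apply Z.le_trans with (1 := proj1 (proj2 (HC 0 H0)) Hv eq_refl).
    apply sumZ_ge_term; auto. intros x Hx. apply HC; auto. }
  clearbody C.
  unfold S in DI, DE. cbn [sumZ] in DI, DE. unfold inv_delta in DI.
  rewrite Tk, Tmk, !Uo in DI. rewrite Tk, Tmk, !Uo in DE.
  clear - DI DE C_le0 C_ge2 Hk HX.
  split; intros Hv; revert DI DE; case_ltb; intros; destruct X; cbn [ell2_on]; congruence || lia.
Qed.

Lemma tr0_notin_WD k : 0 < k -> ~ in_Winf TD (tr 0 k).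
Proof.
  intros Hk [_ Heven]. specialize (Heven eq_refl).
  set (N := Z.to_nat k).
  rewrite (ell0_on_eq N) in Heven by (apply tr_supp_in; lia).
  destruct (tr0_values k) as [Tk Tmk]; try lia.
  assert (Hincl : incl [k; -k] (zwin N)) by (intros x Hx; apply in_zwin; cbn in Hx; lia).
  pose proof (ell0_on_comp N (fun x => x) (tr 0 k) [k; -k] (tr0_fix k)
    ltac:(repeat constructor; cbn; lia) Hincl) as DE.
  assert (E0 : ell0_on N (fun x => x) = 0).
  { apply sumZ_eq0. intros x _. destruct (Z.ltb_spec 0 x), (Z.ltb_spec x 0); reflexivity || lia. }
  change (comp (fun x => x) (tr 0 k)) with (tr 0 k) in DE.
  cbn [sumZ] in DE. rewrite Tk, Tmk in DE. revert DE. case_ltb. intros DE.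
  destruct Heven as [m Hm]. lia.
Qed.

Lemma ell0_on_comp_tr_even N u i k : is_signed_perm u -> 0 < k -> i < k -> i <> 0 -> i <> -k ->
  Z.abs i <= Z.of_nat N -> k <= Z.of_nat N ->
  Z.Even (ell0_on N (comp u (tr i k)) - ell0_on N u).
Proof.
  intros Hu Hk Hik Hi0 Hmk HiN HkN.
  pose proof (signed_perm_0 u Hu) as U0. pose proof Hu as [Ui [_ [Uo _]]].
  destruct (tr_values i k) as [Ti [Tk [Tmi Tmk]]]; try lia.
  assert (Hincl : incl [i; k; -i; -k] (zwin N)) by (intros x Hx; apply in_zwin; cbn in Hx; lia).
  assert (HS : NoDup [i; k; -i; -k]) by (repeat constructor; cbn; lia).
  pose proof (ell0_on_comp N u (tr i k) _ (tr_fix i k) HS Hincl) as DE.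
  assert (u i <> 0 /\ u k <> 0) as [V1 V2] by (rewrite <- U0; split; intros E; apply Ui in E; lia).
  cbn [sumZ] in DE. rewrite Ti, Tk, Tmi, Tmk, !Uo in DE.
  rewrite DE. clear - V1 V2 Hi0 Hk. case_ltb; apply Z.even_spec; reflexivity.
Qed.

Lemma in_Winf_comp_tr X u i k : in_Winf X u -> in_Winf X (tr i k) ->
  0 < k -> i < k -> i <> 0 -> i <> -k -> in_Winf X (comp u (tr i k)).
Proof.
  intros [Hu HuD] [Ht _] Hk Hik Hi0 Hmk. split; [now apply comp_signed_perm|].
  intros HX. destruct (HuD HX) as [a Ha].
  set (N := (supp_bound u + Z.to_nat (Z.abs i + k))%nat).
  assert (HuN : supp_in N u)
    by (apply (supp_in_widen (supp_bound u)); [lia | apply supp_bound_spec, Hu]).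
  assert (HvN : supp_in N (comp u (tr i k)))
    by (apply comp_supp_in; auto; apply tr_supp_in; lia).
  rewrite (ell0_on_eq N) in Ha |- * by assumption.
  destruct (ell0_on_comp_tr_even N u i k Hu Hk Hik Hi0 Hmk ltac:(lia) ltac:(lia)) as [b Hb].
  exists (a + b). lia.
Qed.

Lemma div2_succ_range a a' : a' / 2 = a / 2 + 1 -> a - 2 < a' < a + 4.
Proof. intros. Z.div_mod_to_equations. lia. Qed.

Lemma ell_comp_tr_succ X u i k : is_signed_perm u -> 0 < k -> i < k -> in_Winf X (tr i k) ->
  ell X (comp u (tr i k)) = ell X u + 1 ->
  i <> 0 /\ i <> -k /\ u i < u k /\ forall c, ~ is_middle u i k c.
Proof.
  intros Hu Hk Hik Ht Hell.
  assert (Hmk : i <> -k).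
  { intros ->. rewrite tr_opp in Hell. change (comp u (fun m => m)) with u in Hell. lia. }
  set (N := (supp_bound u + Z.to_nat (Z.abs i + k))%nat).
  assert (HuN : supp_in N u)
    by (apply (supp_in_widen (supp_bound u)); [lia | apply supp_bound_spec, Hu]).
  assert (HvN : supp_in N (comp u (tr i k)))
    by (apply comp_supp_in; auto; apply tr_supp_in; lia).
  pose proof (comp_signed_perm u (tr i k) Hu (proj1 Ht)) as Hv.
  rewrite (ell_eq X N), (ell_eq X N u) in Hell by assumption.
  apply div2_succ_range in Hell.
  pose proof Hu as [Ui _].
  assert (Vk : u k <> u i) by (intros E; apply Ui in E; lia).
  assert (Hi0 : i <> 0).
  { intros ->. rewrite (signed_perm_0 u Hu) in Vk.
    destruct (ell2_on_comp_tr0 X N u k); auto; try lia.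
    intros ->. exact (tr0_notin_WD k Hk Ht). }
  destruct (ell2_on_comp_tr X N u i k) as [Hlt Hmid]; auto; try lia.
  repeat split; auto; [lia|].
  intros c Hc. apply Hmid in Hc. lia.
Qed.

Lemma tr_cases i k p : i <> 0 -> i <> -k -> k <> 0 ->
  (p = i /\ tr i k p = k) \/ (p = k /\ tr i k p = i) \/ (p = -i /\ tr i k p = -k) \/
  (p = -k /\ tr i k p = -i) \/ (~ In p [i; k; -i; -k] /\ tr i k p = p).
Proof.
  intros. destruct (tr_values i k) as [A [B [C D]]]; auto.
  destruct (in_dec Z.eq_dec p [i; k; -i; -k]) as [Hp|Hp].
  - cbn in Hp. intuition subst; auto.
  - right; right; right; right. auto using tr_fix.
Qed.

(* A new descent at m <> k - 1 needs m or m + 1 in {i, k, -i, -k}; in every such case the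
   value of u at m + 1 or at -m (using u (-x) = - u x) lies strictly between u i and u k. *)
Lemma is_des_comp_tr u i k m : is_signed_perm u -> 0 < k -> i < k -> i <> 0 -> i <> -k ->
  u i < u k -> (forall c, ~ is_middle u i k c) ->
  is_des (comp u (tr i k)) m -> is_des u m \/ m = k - 1.
Proof.
  intros Hu Hk Hik Hi0 Hmk Hlt Hmid [Hm0 Hdes]. unfold comp in Hdes.
  destruct (Z.eq_dec m (k - 1)) as [E|E]; [now right | left].
  split; [lia|]. pose proof Hu as [Ui [_ [Uo _]]].
  destruct (Z.lt_total (u (m + 1)) (u m)) as [H|[H|H]]; [exact H | apply Ui in H; lia | exfalso].
  pose proof (Hmid (m + 1)) as N1. pose proof (Hmid (-m)) as N2.
  unfold is_middle in N1, N2. cbn [In] in N1, N2.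
  pose proof (Uo m). pose proof (Uo i). pose proof (Uo k). pose proof (Uo (m + 1)).
  clear Hmid Ui Uo Hu.
  destruct (tr_cases i k m) as [[E1 T1]|[[E1 T1]|[[E1 T1]|[[E1 T1]|[E1 T1]]]]]; try lia;
  destruct (tr_cases i k (m + 1)) as [[E2 T2]|[[E2 T2]|[[E2 T2]|[[E2 T2]|[E2 T2]]]]]; try lia;
  rewrite T1, T2 in Hdes; clear T1 T2;
  try (rewrite E2 in *); try (rewrite E1 in *); cbn [In] in *; lia.
Qed.

Lemma supp_in_of_odd N w : (forall x, w (- x) = - w x) ->
  (forall m, Z.of_nat N < m -> w m = m) -> supp_in N w.
Proof.
  intros Hodd Hpos m Hm. destruct (Z_lt_le_dec 0 m).
  - apply Hpos. lia.
  - rewrite <- (Z.opp_involutive m), Hodd, Hpos; lia.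
Qed.

Theorem lemma2p4 (X : typ) (n : Z) (w : Z -> Z) (i k : Z) :
  0 < n ->
  in_W X n w ->
  1 <= k <= n ->
  i < k ->
  in_Winf X (tr i k) ->
  ell X (comp w (tr i k)) = ell X w + 1 ->
  (* (a) *) in_W X (n + 1) (comp w (tr i k)) /\
  (* (b) *) comp w (tr i k) k < w k /\
  (* (c) *) (forall m, is_des (comp w (tr i k)) m -> is_des w m \/ m = k - 1) /\
  (~ in_W X n (comp w (tr i k)) ->
     (* (d) *) i = - n - 1 /\
     (* (e) *) (forall j, i < j < k -> in_Winf X (tr j k) ->
                  ell X (comp (comp w (tr i k)) (tr j k)) <> ell X (comp w (tr i k)) + 1)).
Proof.
  intros Hn [Hw Hwfix] Hk Hik Ht Hell.
  pose proof (proj1 Hw) as Hws. pose proof Hws as [Wi [_ [Wo _]]].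
  destruct (ell_comp_tr_succ X w i k Hws ltac:(lia) Hik Ht Hell) as [Hi0 [Hmk [Hlt Hmid]]].
  assert (HwN : supp_in (Z.to_nat n) w) by (apply supp_in_of_odd; auto; intros; apply Hwfix; lia).
  assert (Hib : - n - 1 <= i).
  { destruct (Z_le_gt_dec (- n - 1) i) as [E|E]; auto. exfalso.
    pose proof (supp_in_abs_le _ w k Hws HwN ltac:(lia)).
    apply (Hmid (- n - 1)). unfold is_middle. rewrite (HwN i), (HwN (- n - 1)) by lia. cbn. lia. }
  set (v := comp w (tr i k)).
  destruct (tr_values i k) as [Ti [Tk [Tmi Tmk]]]; try lia.
  assert (Hvfix : forall m, n < m -> - i < m -> v m = m)
    by (intros; unfold v, comp; rewrite tr_fix by (cbn; lia); apply Hwfix; lia).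
  assert (Ha : in_W X (n + 1) v).
  { split; [apply in_Winf_comp_tr; auto; lia|]. intros m Hm. apply Hvfix; lia. }
  split; [exact Ha|]. split; [unfold v, comp; now rewrite Tk|]. split.
  - intros m Hm. apply (is_des_comp_tr w i k m); auto; lia.
  - intros Hnot.
    assert (Hi : i = - n - 1).
    { destruct (Z.eq_dec i (- n - 1)); auto. exfalso. apply Hnot.
      split; [apply Ha | intros; apply Hvfix; lia]. }
    split; [exact Hi|]. intros j Hj Htj Hellj.
    destruct Ha as [[Hv _] Hvfix'].
    destruct (ell_comp_tr_succ X v j k Hv ltac:(lia) ltac:(lia) Htj Hellj) as [_ [_ [Hvjk _]]].
    assert (HvN : supp_in (Z.to_nat (n + 1)) v)
      by (apply supp_in_of_odd; [apply Hv | intros; apply Hvfix'; lia]).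
    pose proof (supp_in_abs_le _ v j Hv HvN ltac:(lia)).
    assert (Hvk : v k = - n - 1) by (unfold v, comp; rewrite Tk, Hi; apply HwN; lia).
    assert (v j <> v k) by (intros E; apply (proj1 Hv) in E; lia).
    lia.
Qed.
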